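(* Let $p(x)=\sum_{j=1}^k\frac{\pi_j}{\sigma^d(2\pi)^{d/2}}e^{-\|x-\mu_j\|^2/(2\sigma^2)}$ be a mixture of Gaussians $N(\mu_j,\sigma^2I)$ on $\mathbb{R}^d$ with weights $\pi_j>0$, $\sum_j\pi_j=1$, and let $X\sim p$. Let $\epsilon>0$ satisfy $$\epsilon\le\min_j\left(\frac{\pi_j^{1/d}}{\sqrt{2\pi}\,\sigma e^{16}}\right)^d$$ and suppose $$\min_{j\ne k}\|\mu_j-\mu_k\|>2\sigma\max_j\sqrt{2d\log\Big(\frac1{\sigma\sqrt{2\pi}}\Big)+2\log\Big(\frac1\epsilon\Big)-2\log\Big(\frac1{\pi_j}\Big)}.$$ Then $\mathbb{P}(p(X)<\epsilon)\le e^{-8d}$. *)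

From HB Require Import structures.
From mathcomp Require Import all_boot all_order all_algebra.
From mathcomp Require Import all_classical all_reals all_analysis.
Set Implicit Arguments. Unset Strict Implicit. Unset Printing Implicit Defensive.
Import Order.TTheory GRing.Theory Num.Theory.
Local Open Scope ring_scope.

Section Defs.
Variable R : realType.

Definition sqdist (d : nat) (x y : d.-tuple R) : R :=
  \sum_(i < d) (tnth x i - tnth y i) ^+ 2.

Definition euclid_dist (d : nat) (x y : d.-tuple R) : R := Num.sqrt (sqdist x y).

Definition gmix_density (d k : nat) (w : 'I_k -> R) (mu : 'I_k -> d.-tuple R)
    (sigma : R) (x : d.-tuple R) : R :=
  \sum_(j < k) w j / (sigma ^+ d * powR (2 * (pi : R)) (d%:R / 2))
               * expR (- sqdist x (mu j) / (2 * sigma ^+ 2)).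

(* Lebesgue integral over R^d of a nonnegative extended-real function,
   computed as the iterated integral w.r.t. Lebesgue measure on R
   (equal to the integral w.r.t. d-dimensional Lebesgue measure by Tonelli). *)
Fixpoint lebesgue_integral_Rn (n : nat) : (n.-tuple R -> \bar R) -> \bar R :=
  match n with
  | 0 => fun f => f [tuple]
  | n'.+1 => fun f =>
      (\int[@lebesgue_measure R]_(t in [set: R])
         lebesgue_integral_Rn (fun u : n'.-tuple R => f [tuple of t :: u]))%E
  end.

End Defs.

(* If p(x) < eps, every weighted component w_j N(mu_j, sigma^2 I)(x) is below
   eps <= w_j (2 pi sigma^2)^(-d/2) e^(-16 d), i.e. |x - mu_j|^2 > 32 d sigma^2.
   For such x,
     e^(-|x - mu_j|^2 / (2 sigma^2)) <= e^(-12 d) e^(-|x - mu_j|^2 / (8 sigma^2)),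
   so p(x) <= 2^d e^(-12 d) q(x), where q is the same mixture with variance 4 sigma^2 I.
   Integrating, P(p(X) < eps) <= 2^d e^(-12 d) <= e^(-8 d). *)
From HB Require Import structures.
From mathcomp Require Import all_boot all_order all_algebra.
From mathcomp Require Import all_classical all_reals all_analysis.
From mathcomp Require Import measurable_realfun ring lra.
Set Implicit Arguments. Unset Strict Implicit. Unset Printing Implicit Defensive.
Import Order.TTheory GRing.Theory Num.Theory.
Local Open Scope ring_scope.

Section iterated_integral.
Variable R : realType.
Local Notation mu := (@lebesgue_measure R).
Local Open Scope ereal_scope.

(* Unlike [ge0_le_integral], no measurability is required: the inner
   integrals of an iterated integral are not known to be measurable. *)
Lemma ge0_le_integralT (f g : R -> \bar R) :
  (forall x, 0 <= f x) -> (forall x, f x <= g x) ->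
  \int[mu]_(x in [set: R]) f x <= \int[mu]_(x in [set: R]) g x.
Proof.
move=> f0 fg; have g0 x : 0 <= g x by exact: le_trans (f0 x) (fg x).
rewrite (ge0_integralTE mu f0) (ge0_integralTE mu g0).
apply: ereal_sup_le => _ [h /= hf <-]; exists h => //= x.
exact: le_trans (hf x) (fg x).
Qed.

Lemma lebesgue_integral_Rn_ge0 n (f : n.-tuple R -> \bar R) :
  (forall x, 0 <= f x) -> 0 <= lebesgue_integral_Rn f.
Proof.
elim: n f => [|n IH] f f0 /=; first exact: f0.
by apply: integral_ge0 => t _; apply: IH.
Qed.

Lemma le_lebesgue_integral_Rn n (f g : n.-tuple R -> \bar R) :
  (forall x, 0 <= f x) -> (forall x, f x <= g x) ->
  lebesgue_integral_Rn f <= lebesgue_integral_Rn g.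
Proof.
elim: n f g => [|n IH] f g f0 fg /=; first exact: fg.
by apply: ge0_le_integralT => t; [apply: lebesgue_integral_Rn_ge0 | apply: IH].
Qed.

(* Factors are indexed by [nat] so that the tail of a product has the same shape. *)
Lemma lebesgue_integral_Rn_sum_prod n K (c : 'I_K -> R) (h : 'I_K -> nat -> R -> R) :
  (forall j, (0 <= c j)%R) -> (forall j i t, (0 <= h j i t)%R) ->
  (forall j i, measurable_fun [set: R] (h j i)) ->
  (forall j i, \int[mu]_(t in [set: R]) (h j i t)%:E = 1) ->
  lebesgue_integral_Rn (fun x : n.-tuple R =>
     (\sum_(j < K) c j * \prod_(i < n) h j i (tnth x i))%R%:E) = (\sum_(j < K) c j)%:E.
Proof.
elim: n c h => [|n IH] c h c0 h0 mh h1 /=.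
  by congr EFin; apply: eq_bigr => j _; rewrite big_ord0 mulr1.
have inner t : lebesgue_integral_Rn (fun u : n.-tuple R =>
     (\sum_(j < K) c j * \prod_(i < n.+1) h j i (tnth [tuple of t :: u] i))%R%:E)
   = (\sum_(j < K) c j * h j 0 t)%R%:E.
  rewrite -(IH (fun j => c j * h j 0 t)%R (fun j i => h j i.+1)) //; last first.
    by move=> j; rewrite mulr_ge0.
  congr lebesgue_integral_Rn; apply: funext => u; congr EFin; apply: eq_bigr => j _.
  by rewrite big_ord_recl mulrA; congr (_ * _)%R; apply: eq_bigr => i _; rewrite tnthS.
under eq_integral => t _ do rewrite inner -sumEFin.
rewrite ge0_integral_sum //; last 2 first.
- by move=> j; apply: measurableT_comp => //; apply: measurable_funM => //; exact: mh.
- by move=> j t _; rewrite lee_fin mulr_ge0.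
rewrite -sumEFin; apply: eq_bigr => j _.
under eq_integral do rewrite EFinM.
rewrite ge0_integralZl_EFin ?h1 ?mule1 //.
- by move=> t _; rewrite lee_fin.
- by apply: measurableT_comp => //; exact: mh.
Qed.

End iterated_integral.

Section gaussian_algebra.
Variable R : realType.

Lemma powR_natr_half (a : R) n : 0 <= a -> powR a (n%:R / 2) = Num.sqrt a ^+ n.
Proof.
move=> a0; rewrite -powR12_sqrt // -powR_mulrn ?powR_ge0 // -powRrM.
by rewrite mulrC.
Qed.

Lemma powR_invn_expn (a : R) n : 0 <= a -> (0 < n)%N -> powR a (1 / n%:R) ^+ n = a.
Proof.
move=> a0 n0; rewrite -powR_mulrn ?powR_ge0 // -powRrM mul1r mulVf ?powRr1 //.
by rewrite pnatr_eq0 -lt0n.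
Qed.

Lemma normal_peakE (s : R) : 0 < s -> normal_peak s = (s * Num.sqrt (2 * pi))^-1.
Proof.
move=> s0; rewrite /normal_peak -mulrnAr sqrtrM ?sqr_ge0 // sqrtr_sqr ger0_norm ?ltW //.
by rewrite mulr_natl.
Qed.

Lemma prod_normal_pdf n (m x : n.-tuple R) (s : R) : 0 < s ->
  \prod_(i < n) normal_pdf (nth 0 m i) s (tnth x i) =
  (s * Num.sqrt (2 * pi))^-1 ^+ n * expR (- sqdist x m / (2 * s ^+ 2)).
Proof.
move=> s0; under eq_bigr do rewrite normal_pdfE ?gt_eqF //=.
rewrite big_split /= prodr_const card_ord normal_peakE // -expR_sum.
congr (_ * expR _); rewrite /sqdist /normal_fun -mulr_suml -sumrN -mulr_natl.
by congr (_ / _); apply: eq_bigr => i _; rewrite [tnth m i](tnth_nth 0).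
Qed.

Definition gmix_component n (w s : R) (m x : n.-tuple R) : R :=
  w / (s ^+ n * powR (2 * pi) (n%:R / 2)) * expR (- sqdist x m / (2 * s ^+ 2)).

Lemma gmix_componentE n (w s : R) (m x : n.-tuple R) : 0 < s ->
  gmix_component w s m x =
  w * (s * Num.sqrt (2 * pi))^-1 ^+ n * expR (- sqdist x m / (2 * s ^+ 2)).
Proof.
move=> s0; rewrite /gmix_component powR_natr_half ?mulr_ge0 ?pi_ge0 //.
by rewrite -exprMn exprVn.
Qed.

Lemma gmix_component_prod n (w s : R) (m x : n.-tuple R) : 0 < s ->
  gmix_component w s m x = w * \prod_(i < n) normal_pdf (nth 0 m i) s (tnth x i).
Proof. by move=> s0; rewrite prod_normal_pdf // mulrA gmix_componentE. Qed.

Lemma gmix_component_ge0 n (w s : R) (m x : n.-tuple R) : 0 <= w -> 0 < s ->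
  0 <= gmix_component w s m x.
Proof.
move=> w0 s0; rewrite gmix_componentE // !mulr_ge0 ?expR_ge0 ?exprn_ge0 //.
by rewrite invr_ge0 mulr_ge0 ?sqrtr_ge0 ?ltW.
Qed.

Lemma gmix_component_le_wide n (w s : R) (m x : n.-tuple R) : 0 < s -> 0 < w ->
  gmix_component w s m x < w * (s * Num.sqrt (2 * pi))^-1 ^+ n * expR (- 16 * n%:R) ->
  gmix_component w s m x <= 2 ^+ n * expR (- 12 * n%:R) * gmix_component w (2 * s) m x.
Proof.
move=> s0 w0; rewrite !gmix_componentE ?mulr_gt0 //.
set q := Num.sqrt (2 * pi); set A := w * (s * q)^-1 ^+ n; set v := sqdist x m / s ^+ 2.
have A0 : 0 < A.
  by rewrite mulr_gt0 // exprn_gt0 // invr_gt0 mulr_gt0 // sqrtr_gt0 mulr_gt0 ?pi_gt0.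
have -> : - sqdist x m / (2 * s ^+ 2) = - v / 2.
  by rewrite /v; field; rewrite gt_eqF.
have -> : - sqdist x m / (2 * (2 * s) ^+ 2) = - v / 8.
  by rewrite /v; field; rewrite gt_eqF.
have -> : 2 ^+ n * expR (- 12 * n%:R) * (w * (2 * s * q)^-1 ^+ n * expR (- v / 8))
    = A * expR (- 12 * n%:R - v / 8).
  rewrite -[2 * s * q]mulrA invfM exprMn exprVn expRD /A !mulNr.
  have : 2 ^+ n != 0 :> R by rewrite expf_neq0.
  (* [field] does not handle powers with a variable exponent. *)
  by move: (2 ^+ n) ((s * q)^-1 ^+ n) => t Q t0; field.
rewrite ltr_pM2l // ltr_expR ler_pM2l // ler_expR.
have : 0 <= n%:R :> R by [].
lra.
Qed.

Lemma gmix_component_thresholdE n (w s : R) : 0 <= w -> (0 < n)%N ->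
  (powR w (1 / n%:R) / (Num.sqrt (2 * pi) * s * expR 16)) ^+ n =
  w * (s * Num.sqrt (2 * pi))^-1 ^+ n * expR (- 16 * n%:R).
Proof.
move=> w0 n0; rewrite expr_div_n powR_invn_expn // exprMn -expRM_natl.
by rewrite mulNr expRN invfM exprVn mulrA [_ * s]mulrC [16 * _]mulrC.
Qed.

End gaussian_algebra.

Section mixture.
Variables (R : realType) (k : nat) (w : 'I_k -> R).
Hypothesis w_gt0 : forall j, 0 < w j.

Lemma gmix_densityE n (mu : 'I_k -> n.-tuple R) (s : R) x :
  gmix_density w mu s x = \sum_(j < k) gmix_component (w j) s (mu j) x.
Proof. by []. Qed.

Lemma gmix_density_ge0 n (mu : 'I_k -> n.-tuple R) (s : R) x : 0 < s ->
  0 <= gmix_density w mu s x.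
Proof.
move=> s0; rewrite gmix_densityE sumr_ge0 // => j _.
exact: gmix_component_ge0 (ltW (w_gt0 j)) s0.
Qed.

Lemma gmix_density_dim0 (mu : 'I_k -> 0.-tuple R) (s : R) x :
  gmix_density w mu s x = \sum_(j < k) w j.
Proof.
apply: eq_bigr => j _.
by rewrite /sqdist big_ord0 expr0 mul0r powRr0 mulr1 invr1 mulr1 oppr0 mul0r expR0 mulr1.
Qed.

Lemma lebesgue_integral_Rn_gmix_density n (mu : 'I_k -> n.-tuple R) (s c : R) :
  0 <= c -> 0 < s ->
  lebesgue_integral_Rn (fun x => (c * gmix_density w mu s x)%:E) =
  (c * \sum_(j < k) w j)%:E.
Proof.
move=> c0 s0; rewrite mulr_sumr -(@lebesgue_integral_Rn_sum_prod _ n _ _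
  (fun j i => normal_pdf (nth 0 (mu j) i) s)); last 4 first.
- by move=> j; rewrite mulr_ge0 // ltW ?w_gt0.
- by move=> j i t; exact: normal_pdf_ge0.
- by move=> j i; exact: measurable_normal_pdf.
- by move=> j i; exact: integral_normal_pdf.
congr lebesgue_integral_Rn; apply: funext => x; congr EFin.
rewrite gmix_densityE mulr_sumr; apply: eq_bigr => j _.
by rewrite gmix_component_prod // mulrA.
Qed.

Lemma gmix_density_le_wide n (mu : 'I_k -> n.-tuple R) (s eps : R) x :
  (0 < n)%N -> 0 < s ->
  (forall j, eps <= (powR (w j) (1 / n%:R) / (Num.sqrt (2 * pi) * s * expR 16)) ^+ n) ->
  gmix_density w mu s x < eps ->
  gmix_density w mu s x <= 2 ^+ n * expR (- 12 * n%:R) * gmix_density w mu (2 * s) x.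
Proof.
move=> n0 s0 eps_le lt_eps; rewrite !gmix_densityE mulr_sumr ler_sum // => j _.
apply: gmix_component_le_wide => //.
rewrite -gmix_component_thresholdE ?ltW //; apply: lt_le_trans (eps_le j).
apply: le_lt_trans lt_eps; rewrite gmix_densityE (bigD1 j) //= lerDl.
by rewrite sumr_ge0 // => l _; exact: gmix_component_ge0 (ltW (w_gt0 l)) s0.
Qed.

End mixture.

Lemma expn2_mul_expR_le (R : realType) n :
  2 ^+ n * expR (- 12 * n%:R) <= expR (- 8 * n%:R) :> R.
Proof.
have two_le_e : 2 <= expR 1 :> R by have := expR_ge1Dx (1 : R); lra.
have : 2 ^+ n <= expR n%:R :> R.
  by rewrite -[n%:R]mulr1 expRM_natl lerXn2r ?nnegrE ?expR_ge0.
move/(ler_wpM2r (expR_ge0 (- 12 * n%:R))) => /le_trans; apply.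
rewrite -expRD ler_expR.
have : 0 <= n%:R :> R by [].
lra.
Qed.

Theorem lemma7 (R : realType) (d k : nat) (w : 'I_k -> R)
    (mu : 'I_k -> d.-tuple R) (sigma eps : R) :
  0 < sigma ->
  (forall j, 0 < w j) ->
  \sum_(j < k) w j = 1 ->
  0 < eps ->
  (forall j, eps <= (powR (w j) (1 / d%:R)
                      / (Num.sqrt (2 * pi) * sigma * expR 16)) ^+ d) ->
  (forall j l, j != l -> forall i,
     euclid_dist (mu j) (mu l) >
       2 * sigma * Num.sqrt (2 * d%:R * ln (1 / (sigma * Num.sqrt (2 * pi)))
                             + 2 * ln (1 / eps) - 2 * ln (1 / w i))) ->
  (lebesgue_integral_Rn
     (fun x : d.-tuple R =>
        (if gmix_density w mu sigma x < eps then gmix_density w mu sigma x else 0)%:E)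
   <= (expR (- 8 * d%:R))%:E)%E.
Proof.
move=> s0 w_gt0 w1 _ eps_le _.
case: d mu eps_le => [|n] mu eps_le.
  have eps_le1 : eps <= 1.
    case: k w w_gt0 w1 mu eps_le => [w _|k w _ _ _ /(_ ord0)]; last by rewrite expr0.
    by rewrite big_ord0 => /eqP; rewrite eq_sym oner_eq0.
  by rewrite /= gmix_density_dim0 w1 ltNge eps_le1 lee_fin expR_ge0.
pose c : R := 2 ^+ n.+1 * expR (- 12 * n.+1%:R).
have c0 : 0 <= c by rewrite mulr_ge0 ?exprn_ge0 ?expR_ge0.
apply: (@le_trans _ _ (lebesgue_integral_Rn
  (fun x => (c * gmix_density w mu (2 * sigma) x)%:E))).
  apply: le_lebesgue_integral_Rn => x; case: ifPn => lt_eps; rewrite lee_fin //.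
  - exact: gmix_density_ge0.
  - exact: gmix_density_le_wide.
  - by rewrite mulr_ge0 // gmix_density_ge0 // mulr_gt0.
rewrite lebesgue_integral_Rn_gmix_density ?mulr_gt0 // w1 mulr1 lee_fin.
exact: expn2_mul_expR_le.
Qed.
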